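(* Let $r\ge1$ and $n\ge1$ be integers and let $\mathcal P(n,r,1)$ be the set of lattice paths with steps $(1,1)$ (up) and $(1,-r)$ (down) from $(0,0)$ to $((r+1)n+1,1)$ (so with $rn+1$ up steps and $n$ down steps). (1) For each $k=1,2,\dots,rn+1$, the number of paths in $\mathcal P(n,r,1)$ that start with an up step and have exactly $k$ up steps starting on or below the $x$-axis is $\frac{1}{rn+1}\binom{(r+1)n}{n}$. (2) For each $k=1,2,\dots,n$, the number of paths in $\mathcal P(n,r,1)$ that start with a down step and have exactly $k$ down steps starting on or below the $x$-axis is $\frac1n\binom{(r+1)n}{n-1}$. (3) For each $k=1,2,\dots,(r+1)n+1$, the number of paths in $\mathcal P(n,r,1)$ with exactly $k$ vertices on or below the $x$-axis is $\frac{1}{(r+1)n+1}\binom{(r+1)n+1}{n}$.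
   Context: A step starts on or below the $x$-axis if its initial vertex has $y$-coordinate $\le0$; a vertex is on or below the $x$-axis if its $y$-coordinate is $\le0$ (the final vertex, at height $1$, is never counted). *)

From HB Require Import structures.
From mathcomp Require Import all_boot all_order all_algebra.
Set Implicit Arguments. Unset Strict Implicit. Unset Printing Implicit Defensive.
Import Order.TTheory GRing.Theory Num.Theory.

(* A lattice path is a sequence of steps: true = up step (1,1),
   false = down step (1,-r). *)

Definition height (r : nat) (s : seq bool) : int :=
  \sum_(b <- s) (if b then 1%:Z else - (r%:Z))%R.

Definition in_P (n r : nat) (p : seq bool) : bool :=
  (size p == (r.+1 * n).+1) && (count negb p == n).

(* the i-th vertex is (i, height r (take i p)); step i (0-based) starts at
   vertex i.  Step i starts on or below the x-axis iff height <= 0. *)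
Definition starts_below (r : nat) (p : seq bool) (i : nat) : bool :=
  (height r (take i p) <= 0)%R.

Definition n_up_below (r : nat) (p : seq bool) : nat :=
  count (fun i => nth false p i && starts_below r p i) (iota 0 (size p)).

Definition n_down_below (r : nat) (p : seq bool) : nat :=
  count (fun i => ~~ nth false p i && starts_below r p i) (iota 0 (size p)).

(* number of vertices on or below the x-axis; vertices 0 .. size p - 1
   (the final vertex is not counted) *)
Definition n_vert_below (r : nat) (p : seq bool) : nat :=
  count (fun i => starts_below r p i) (iota 0 (size p)).

From HB Require Import structures.
From mathcomp Require Import all_boot all_order all_algebra zify.
Import Order.TTheory GRing.Theory Num.Theory.
Set Implicit Arguments. Unset Strict Implicit.

(* Cycle lemma.  Rotating a path of final height 1 to start at vertex [j],
   vertex [m] ends up on or below the axis iff [m] precedes [j] when vertices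
   are ordered by height, ties broken by decreasing index.  This is a total
   order, so for a class [P] of steps the number of low [P]-steps of the
   rotation at a [P]-step [j] is the rank of [j] among the [P]-steps: each
   value [1..#P-steps] is taken by exactly one rotation starting with a
   [P]-step.  Counting pairs (rotation, path) gives
   #{paths starting with a [P]-step with [k] low [P]-steps} * N = 'C(N, n),
   and [P] = up, down, any step yields the three formulas. *)

Lemma count_lt_subpred (T : eqType) (a b : pred T) (s : seq T) (x : T) :
  subpred a b -> x \in s -> b x -> ~~ a x -> (count a s < count b s)%N.
Proof.
move=> sub_ab; elim: s => //= z s IHs; rewrite inE => /orP [/eqP <- | s_x] bx nax.
  by rewrite bx (negbTE nax) add1n ltnS sub_count.
have le_z : (a z <= b z)%N by case az: (a z); rewrite // (sub_ab z az).
by rewrite -addnS leq_add // IHs.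
Qed.

Section Ranks.

Variables (T : eqType) (le : rel T).
Hypotheses (le_refl : reflexive le) (le_trans : transitive le)
  (le_total : total le) (le_anti : antisymmetric le).

Definition rank_in (s : seq T) (x : T) := count (le^~ x) s.

Lemma rank_in_ltn s x y :
  x != y -> y \in s -> le x y -> (rank_in s x < rank_in s y)%N.
Proof.
move=> neq_xy s_y le_xy; apply: (count_lt_subpred (x := y)) => //.
- by move=> z le_zx; apply: le_trans le_xy.
- apply: contra neq_xy => le_yx; apply/eqP/le_anti.
  by rewrite le_xy le_yx.
Qed.

Lemma perm_ranks s :
  uniq s -> perm_eq [seq rank_in s x | x <- s] (iota 1 (size s)).
Proof.
move=> uniq_s.
have inj_rank : {in s &, injective (rank_in s)}.
  move=> x y s_x s_y eq_rank; apply/eqP; apply: contraT => neq_xy.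
  case/orP: (le_total x y) => [le_xy | le_yx].
    by have := rank_in_ltn neq_xy s_y le_xy; rewrite eq_rank ltnn.
  rewrite eq_sym in neq_xy.
  by have := rank_in_ltn neq_xy s_x le_yx; rewrite eq_rank ltnn.
have uniq_ranks : uniq [seq rank_in s x | x <- s] by rewrite map_inj_in_uniq.
have sub_iota : {subset [seq rank_in s x | x <- s] <= iota 1 (size s)}.
  move=> _ /mapP [x s_x ->]; rewrite mem_iota add1n ltnS count_size andbT.
  by rewrite -has_count; apply/hasP; exists x.
have size_ranks : (size (iota 1 (size s)) <= size [seq rank_in s x | x <- s])%N.
  by rewrite size_iota size_map.
have [_ eq_mem] := uniq_min_size uniq_ranks sub_iota size_ranks.
by apply: uniq_perm; rewrite ?iota_uniq.
Qed.

Lemma count_rank_eq s k : uniq s ->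
  count (fun x => rank_in s x == k) s = (0 < k <= size s)%N.
Proof.
move=> uniq_s; rewrite -[LHS](count_map _ (pred1 k)) (permP (perm_ranks uniq_s)).
by rewrite count_uniq_mem ?iota_uniq // mem_iota add1n ltnS.
Qed.

End Ranks.

Lemma height_cat r s1 s2 : height r (s1 ++ s2) = (height r s1 + height r s2)%R.
Proof. by rewrite /height big_cat. Qed.

Lemma height_count r s :
  height r s = ((count id s)%:Z - (count negb s * r)%:Z)%R.
Proof.
elim: s => [|b s IHs]; first by rewrite /height big_nil.
by rewrite /height big_cons -/(height r s) IHs; case: b => /=; lia.
Qed.

Lemma in_P_count_up n r p : in_P n r p -> count id p = r * n + 1.
Proof.
case/andP => /eqP size_p /eqP count_down.
by have := count_predC id p; rewrite size_p [count (predC id) p]count_down; lia.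
Qed.

Lemma in_P_height n r p : in_P n r p -> height r p = 1%R.
Proof.
move=> Pp; rewrite height_count (in_P_count_up Pp).
by case/andP: Pp => _ /eqP ->; lia.
Qed.

Lemma in_P_rot n r p j : in_P n r (rot j p) = in_P n r p.
Proof.
have /permP count_rot : perm_eq (rot j p) p by rewrite perm_rot.
by rewrite /in_P size_rot count_rot.
Qed.

Definition n_below (P : pred bool) (r : nat) (p : seq bool) : nat :=
  count (fun i => P (nth false p i) && starts_below r p i) (iota 0 (size p)).

Section Rotation.

Variables (r : nat) (p : seq bool).

Local Notation N := (size p).
Local Notation vheight m := (height r (take m p)).

(* Vertex [m] lies on or below the x-axis of [rot j p] iff [vertex_le m j]:
   vertices ordered by height, ties broken by decreasing index. *)
Definition vertex_le (m j : nat) : bool :=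
  if (j <= m)%N then (vheight m <= vheight j)%R else (vheight m < vheight j)%R.

Lemma vertex_le_refl : reflexive vertex_le.
Proof. by move=> j; rewrite /vertex_le leqnn lexx. Qed.

Lemma vertex_le_trans : transitive vertex_le.
Proof.
move=> j1 j2 m; rewrite /vertex_le.
move: (vheight j1) (vheight j2) (vheight m) => a b c.
by case: (leqP j1 j2); case: (leqP m j1); case: (leqP m j2); lia.
Qed.

Lemma vertex_le_total : total vertex_le.
Proof.
move=> j1 j2; rewrite /vertex_le; move: (vheight j1) (vheight j2) => a b.
by case: (leqP j2 j1); case: (leqP j1 j2); lia.
Qed.

Lemma vertex_le_anti : antisymmetric vertex_le.
Proof.
move=> j1 j2; rewrite /vertex_le; move: (vheight j1) (vheight j2) => a b.
by case: (leqP j2 j1); case: (leqP j1 j2) => ? ? /andP [? ?]; lia.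
Qed.

Hypothesis height_p : height r p = 1%R.

Lemma nth_rot_hi j i : (i < N - j)%N ->
  nth false (rot j p) i = nth false p (j + i).
Proof. by move=> lt_i; rewrite /rot nth_cat size_drop lt_i nth_drop. Qed.

Lemma nth_rot_lo j i : (i < j < N)%N ->
  nth false (rot j p) (N - j + i) = nth false p i.
Proof.
case/andP=> lt_ij lt_j.
have not_lt : (N - j + i < N - j)%N = false by rewrite ltnNge leq_addr.
by rewrite /rot nth_cat size_drop not_lt addKn nth_take.
Qed.

Lemma starts_below_rot_hi j i : (i < N - j)%N ->
  starts_below r (rot j p) i = vertex_le (j + i) j.
Proof.
move=> lt_i; rewrite /starts_below /vertex_le /rot take_cat size_drop lt_i.
by rewrite leq_addr takeD height_cat; lia.
Qed.

Lemma starts_below_rot_lo j i : (i < j < N)%N ->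
  starts_below r (rot j p) (N - j + i) = vertex_le i j.
Proof.
case/andP=> lt_ij lt_j.
have height_drop : height r (drop j p) = (1 - vheight j)%R.
  by rewrite -height_p -{2}(cat_take_drop j p) height_cat addrC addKr.
have not_lt : (N - j + i < N - j)%N = false by rewrite ltnNge leq_addr.
have not_le : (j <= i)%N = false by rewrite leqNgt lt_ij.
rewrite /starts_below /vertex_le /rot take_cat size_drop not_lt not_le addKn.
by rewrite height_cat height_drop (take_takel _ (ltnW lt_ij)); lia.
Qed.

Lemma n_below_rot (P : pred bool) j : (j < N)%N ->
  n_below P r (rot j p)
  = count (fun m => P (nth false p m) && vertex_le m j) (iota 0 N).
Proof.
move=> lt_j; rewrite /n_below size_rot.
have iota_lo : iota 0 N = iota 0 (N - j) ++ map (addn (N - j)) (iota 0 j).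
  by rewrite -iotaDl addn0 -iotaD subnK // ltnW.
have iota_hi : iota 0 N = iota 0 j ++ map (addn j) (iota 0 (N - j)).
  by rewrite -iotaDl addn0 -iotaD subnKC // ltnW.
rewrite {1}iota_lo {1}iota_hi !count_cat !count_map addnC.
congr (_ + _); apply: eq_in_count => i; rewrite mem_iota => /andP [_ lt_i] /=.
- by rewrite nth_rot_lo ?starts_below_rot_lo ?lt_i.
- by rewrite nth_rot_hi ?starts_below_rot_hi.
Qed.

End Rotation.

Lemma count_nth_iota (P : pred bool) (p : seq bool) :
  count (fun m => P (nth false p m)) (iota 0 (size p)) = count P p.
Proof. by rewrite -[in RHS](mkseq_nth false p) /mkseq count_map. Qed.

Lemma unique_rotation_n_below (P : pred bool) r p k :
  height r p = 1%R -> (0 < k <= count P p)%N ->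
  count (fun j => P (nth false p j) && (n_below P r (rot j p) == k))
        (iota 0 (size p)) = 1.
Proof.
move=> height_p range_k.
pose s := filter (fun m => P (nth false p m)) (iota 0 (size p)).
have uniq_s : uniq s by rewrite filter_uniq ?iota_uniq.
have size_s : size s = count P p by rewrite size_filter count_nth_iota.
transitivity (count (fun j => rank_in (vertex_le r p) s j == k) s); last first.
  by rewrite (count_rank_eq (@vertex_le_refl r p) (@vertex_le_trans r p)
    (@vertex_le_total r p) (@vertex_le_anti r p)) // size_s range_k.
rewrite count_filter; apply: eq_in_count => j; rewrite mem_iota => /andP [_ lt_j].
rewrite /= n_below_rot // /rank_in count_filter andbC.
by congr ((_ == k) && _); apply: eq_count => m; rewrite /= andbC.
Qed.

Lemma card_ord_count (N : nat) (Q : pred nat) :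
  #|[set j : 'I_N | Q j]| = count Q (iota 0 N).
Proof.
rewrite -sum1_card (eq_bigl (fun j : 'I_N => Q j)) => [|j]; last by rewrite inE.
by rewrite -(big_mkord Q (fun _ => 1)) sum1_count /index_iota subn0.
Qed.

(* Counting pairs (rotation, tuple) in two ways. *)
Lemma card_rot_transversal (T : finType) (N : nat) (A S : {set N.-tuple T}) :
  (forall t, #|[set j : 'I_N | rot_tuple j t \in A]| = (t \in S)) ->
  #|A| * N = #|S|.
Proof.
move=> one_rot.
have card_if (U : finType) (X : {set U}) :
  #|X| = \sum_u (if u \in X then 1 else 0) by rewrite -sum1_card big_mkcond.
have card_preim (j : 'I_N) : #|[set t | rot_tuple j t \in A]| = #|A|.
  by apply: card_preimset => t1 t2 /(congr1 val) /rot_inj /val_inj.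
transitivity (\sum_(j : 'I_N) #|[set t | rot_tuple j t \in A]|).
  by rewrite (eq_bigr _ (fun j _ => card_preim j)) sum_nat_const card_ord mulnC.
under eq_bigr do rewrite card_if.
rewrite exchange_big [#|S|]card_if; apply: eq_bigr => t _.
rewrite -[RHS]/(nat_of_bool (t \in S)) -one_rot card_if.
by apply: eq_bigr => j _; rewrite !inE.
Qed.

Lemma card_count_negb (N m : nat) :
  #|[set t : N.-tuple bool | count negb t == m]| = 'C(N, m).
Proof.
pose falses (t : N.-tuple bool) := [set i : 'I_N | ~~ tnth t i].
have card_falses t : #|falses t| = count negb t.
  rewrite -[in RHS](count_nth_iota negb) size_tuple -card_ord_count.
  by apply: eq_card => i; rewrite !inE (tnth_nth false).
have falses_inj : injective falses.
  move=> t1 t2 /setP eq_falses; apply: eq_from_tnth => i.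
  by apply: negb_inj; have := eq_falses i; rewrite !inE.
rewrite -[N in RHS]card_ord -card_draws -(card_imset _ falses_inj).
apply: eq_card => B; rewrite [in RHS]inE.
apply/imsetP/idP => [[t + ->] | card_B]; first by rewrite inE card_falses.
have falses_B : falses [tuple ~~ (i \in B) | i < N] = B.
  by apply/setP => i; rewrite inE tnth_mktuple negbK.
by exists [tuple ~~ (i \in B) | i < N]; rewrite // inE -card_falses falses_B.
Qed.

Lemma card_in_P n r :
  #|[set p : ((r.+1 * n).+1).-tuple bool | in_P n r p]| = 'C((r.+1 * n).+1, n).
Proof.
rewrite -card_count_negb; apply: eq_card => t.
by rewrite !inE /in_P size_tuple eqxx.
Qed.

Lemma card_head_n_below_eq (P : pred bool) n r k :
  (forall p, in_P n r p -> (0 < k <= count P p)%N) ->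
  #|[set p : ((r.+1 * n).+1).-tuple bool |
      in_P n r p && P (nth false p 0) && (n_below P r p == k)]| * (r.+1 * n).+1
  = 'C((r.+1 * n).+1, n).
Proof.
move=> range_k; rewrite -card_in_P; apply: card_rot_transversal => t.
pose Q j := in_P n r t && P (nth false t j) && (n_below P r (rot j t) == k).
transitivity #|[set j : 'I_(r.+1 * n).+1 | Q j]|.
  apply: eq_card => j; rewrite !inE /= in_P_rot.
  by rewrite nth_rot_hi ?size_tuple ?subn_gt0 // addn0.
rewrite card_ord_count inE /Q; case Pt: (in_P n r t); last exact: count_pred0.
rewrite -[X in iota 0 X](size_tuple t).
exact: unique_rotation_n_below (in_P_height Pt) (range_k _ Pt).
Qed.

Lemma natr_eq_mulVr (R : numFieldType) (a m b : nat) :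
  a * m = b -> (0 < m)%N -> (a%:R = (m%:R)^-1 * b%:R :> R)%R.
Proof.
by move=> <- m_gt0; rewrite natrM [(a%:R * _)%R]mulrC mulKf // pnatr_eq0 -lt0n.
Qed.

Section Formulas.

Variables (n r : nat).
Local Notation N := (r.+1 * n).+1.

Lemma card_up_first k : (0 < k <= r * n + 1)%N ->
  #|[set p : N.-tuple bool | in_P n r p && (nth false p 0 == true)
                              && (n_up_below r p == k)]| * (r * n + 1)
  = 'C(r.+1 * n, n).
Proof.
move=> range_k; under eq_finset => p do rewrite eqb_id.
have range_up p : in_P n r p -> (0 < k <= count id p)%N.
  by move=> Pp; rewrite (in_P_count_up Pp).
have := card_head_n_below_eq range_up; set a := #|_| => low.
apply/eqP; rewrite -(eqn_pmul2l (ltn0Sn (r.+1 * n))).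
have := mul_bin_down N n; rewrite /= => ->.
rewrite -low (_ : N - n = r * n + 1); last by lia.
by apply/eqP; lia.
Qed.

Lemma card_down_first k : (0 < k <= n)%N ->
  #|[set p : N.-tuple bool | in_P n r p && (nth false p 0 == false)
                              && (n_down_below r p == k)]| * n
  = 'C(r.+1 * n, n.-1).
Proof.
move=> range_k; under eq_finset => p do rewrite eqbF_neg.
have range_down p : in_P n r p -> (0 < k <= count negb p)%N.
  by case/andP=> _ /eqP ->.
have := card_head_n_below_eq range_down; set a := #|_| => low.
apply/eqP; rewrite -(eqn_pmul2l (ltn0Sn (r.+1 * n))).
have n_gt0 : (0 < n)%N by case/andP: range_k => /leq_trans; apply.
have := mul_bin_diag N n.-1; rewrite /= prednK // => ->.
by rewrite -low; apply/eqP; lia.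
Qed.

Lemma card_vert k : (0 < k <= N)%N ->
  #|[set p : N.-tuple bool | in_P n r p && (n_vert_below r p == k)]| * N
  = 'C(N, n).
Proof.
move=> range_k.
have range_all p : in_P n r p -> (0 < k <= count predT p)%N.
  by case/andP=> /eqP size_p _; rewrite count_predT size_p.
rewrite -(card_head_n_below_eq range_all); congr (_ * _).
by apply: eq_card => p; rewrite !inE andbT.
Qed.

End Formulas.

Theorem theorem13 (r n : nat) (hr : (1 <= r)%N) (hn : (1 <= n)%N) :
  let N := (r.+1 * n).+1 in
  (forall k : nat, (1 <= k <= r * n + 1)%N ->
     (#|[set p : N.-tuple bool |
          in_P n r p && (nth false p 0 == true) && (n_up_below r p == k)]|%:R
      : rat)
     = ((r * n + 1)%:R)^-1 * ('C(r.+1 * n, n))%:R)%R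
  /\
  (forall k : nat, (1 <= k <= n)%N ->
     (#|[set p : N.-tuple bool |
          in_P n r p && (nth false p 0 == false) && (n_down_below r p == k)]|%:R
      : rat)
     = (n%:R)^-1 * ('C(r.+1 * n, n.-1))%:R)%R
  /\
  (forall k : nat, (1 <= k <= N)%N ->
     (#|[set p : N.-tuple bool | in_P n r p && (n_vert_below r p == k)]|%:R
      : rat)
     = (N%:R)^-1 * ('C(N, n))%:R)%R.
Proof.
move=> N; split; [|split] => k range_k; apply: natr_eq_mulVr.
- exact: card_up_first.
- by rewrite addn1.
- exact: card_down_first.
- exact: hn.
- exact: card_vert.
- by [].
Qed.
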